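(* Let $n\ge 2$ and let $\overrightarrow{K_{1,n}}$ be an orientation of the star $K_{1,n}$. Then $\overrightarrow{K_{1,n}}$ is $\{0,2\}$-antimagic if and only if its center is neither a source nor a sink.
   Context: An oriented graph $\overrightarrow{G}$ is a directed graph obtained from a simple undirected graph by giving each edge one direction. For vertices $u,v$, $d(u,v)$ is the length of a shortest directed path from $u$ to $v$ ($d(u,u)=0$, and $d(u,v)=\infty$ if there is no such path). Let $\partial=\max\{d(u,v)<\infty : u,v\in V(\overrightarrow{G})\}$. A distance set is a nonempty $D\subseteq\{0,1,\dots,\partial\}$. The $D$-neighborhood of $u$ is $N_D(u)=\{v : d(u,v)\in D\}$. For a bijection $f:V(\overrightarrow{G})\to\{1,\dots,|V(\overrightarrow{G})|\}$, the $D$-weight of $u$ is $\omega_D(u)=\sum_{v\in N_D(u)} f(v)$. $\overrightarrow{G}$ is $D$-antimagic if $D\subseteq\{0,\dots,\partial\}$ (in particular, $\{0,2\}$-antimagic requires $\partial\ge 2$) and there is such a bijection $f$ with all $D$-weights pairwise distinct. The center of $\overrightarrow{K_{1,n}}$ is its vertex of degree $n$; a source is a vertex of in-degree $0$ and a sink a vertex of out-degree $0$. *)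

From mathcomp Require Import all_boot.
Set Implicit Arguments. Unset Strict Implicit. Unset Printing Implicit Defensive.

Section Oriented.
Variables (T : finType) (arc : rel T).

Fixpoint walkn (k : nat) (u v : T) : bool :=
  match k with
  | 0 => u == v
  | k'.+1 => [exists w, arc u w && walkn k' w v]
  end.

Definition dist_is (k : nat) (u v : T) : bool :=
  walkn k u v && [forall j : 'I_k, ~~ walkn j u v].

(* partial = max of finite distances (all finite distances are < #|T|) *)
Definition diam : nat :=
  \max_(u : T) \max_(v : T) \max_(k < #|T| | dist_is k u v) k.

Definition Dweight (D : pred nat) (f : T -> nat) (u : T) : nat :=
  \sum_(v : T | [exists k : 'I_#|T|, D k && dist_is k u v]) f v.

Definition labeling (f : T -> nat) : Prop :=
  injective f /\ forall v, 0 < f v <= #|T|.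

Definition antimagic (D : pred nat) : Prop :=
  (exists k, D k) /\ (forall k, D k -> k <= diam) /\
  exists f, labeling f /\ injective (Dweight D f).

Definition source (u : T) : bool := [forall v, ~~ arc v u].
Definition sink (u : T) : bool := [forall v, ~~ arc u v].
End Oriented.

(* Orientation of the star K_{1,n}: vertices option 'I_n, center None,
   leaves Some i; o i = true means the edge is oriented center -> leaf i. *)
Definition star_arc (n : nat) (o : 'I_n -> bool) : rel (option 'I_n) :=
  fun x y => match x, y with
             | None, Some i => o i
             | Some i, None => ~~ o i
             | _, _ => false
             end.

Definition D02 : pred nat := fun k => (k == 0) || (k == 2).

(* A walk of length 2 in an oriented star must run leaf -> center -> leaf, so
   it exists iff the center has both an in-neighbour and an out-neighbour.
   If the center is a source or a sink there is no such walk, hence the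
   diameter is at most 1 and {0,2} is not a distance set.  Otherwise the
   {0,2}-weight of a vertex is its own label, plus, for a leaf pointing to the
   center, the sum S of the labels of the leaves the center points to.  Giving
   the largest label |V| to one of the latter forces S >= |V|, which separates
   the weights of the two kinds of vertices; within each kind the weights
   differ because the labels do. *)
From mathcomp Require Import all_boot perm zify.

Set Implicit Arguments.
Unset Strict Implicit.
Unset Printing Implicit Defensive.

Section Distances.
Variables (T : finType) (arc : rel T).

Lemma walkn1 u v : walkn arc 1 u v = arc u v.
Proof.
apply/existsP/idP => [[w /andP[uw /eqP <-]] // | uv].
by exists v; rewrite uv eqxx.
Qed.

Lemma walkn2 u v : walkn arc 2 u v = [exists w, arc u w && arc w v].
Proof. by apply: eq_existsb => w; rewrite -[arc w v]walkn1. Qed.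

Lemma walkn_prefix m k u v :
  walkn arc (m + k) u v -> exists w, walkn arc m u w.
Proof.
elim: m u => [|m IHm] u; first by exists u; rewrite /= eqxx.
rewrite addSn => /existsP[w' /andP[uw' /IHm[w w'w]]].
by exists w; apply/existsP; exists w'; rewrite uw'.
Qed.

Lemma dist_is0 u v : dist_is arc 0 u v = (u == v).
Proof. by rewrite /dist_is /=; apply: andb_idr => _; apply/forallP => -[]. Qed.

Lemma dist_is2 u v :
  dist_is arc 2 u v = [&& walkn arc 2 u v, u != v & ~~ arc u v].
Proof.
rewrite /dist_is -walkn1; congr (_ && _).
apply/forallP/andP => [no_walk | [u_neq_v not_uv] [[|[|//]] _] //].
by split; [apply: (no_walk ord0) | apply: (no_walk (Ordinal (isT : 1 < 2)))].
Qed.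

Lemma D02_nbhdE u v : 2 < #|T| ->
  [exists k : 'I_#|T|, D02 k && dist_is arc k u v]
    = dist_is arc 0 u v || dist_is arc 2 u v.
Proof.
move=> T_gt2; apply/existsP/orP => [[k /andP[/orP[] /eqP <- d]] | []].
- by left.
- by right.
- by exists (Ordinal (ltn_trans (isT : 0 < 2) T_gt2)).
- by exists (Ordinal T_gt2).
Qed.

Lemma dist_le_diam k u v : k < #|T| -> dist_is arc k u v -> k <= diam arc.
Proof.
move=> k_lt d; rewrite /diam.
apply: leq_trans (leq_bigmax u); apply: leq_trans (leq_bigmax v).
exact: (leq_bigmax_cond (Ordinal k_lt) d).
Qed.

Lemma diam_gt1_walkn2 :
  1 < diam arc -> [exists u, exists v, walkn arc 2 u v].
Proof.
apply: contraLR; rewrite -leqNgt => /existsPn no_walk2.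
apply/bigmax_leqP => u _; apply/bigmax_leqP => v _.
apply/bigmax_leqP => -[[|[|k]] _] //= /andP[walk _].
have [w uw] := walkn_prefix (m := 2) walk.
by move/existsPn: (no_walk2 u) => /(_ w); rewrite uw.
Qed.

End Distances.

Lemma exists_labeling_max (T : finType) (a : T) :
  exists2 f : T -> nat, labeling f & f a = #|T|.
Proof.
have last_lt : #|T|.-1 < #|T| by rewrite ltn_predL; apply/card_gt0P; exists a.
pose b := enum_val (Ordinal last_lt).
exists (fun x => (enum_rank (tperm a b x)).+1); last first.
  by rewrite tpermL enum_valK /= prednK // (leq_ltn_trans _ last_lt).
split=> [x y [] /val_inj /enum_rank_inj /perm_inj // | x].
exact: ltn_ord.
Qed.

Section Star.
Variables (n : nat) (o : 'I_n -> bool).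
Notation V := (option 'I_n).
Notation arc := (star_arc o).

Definition in_leaf (x : V) : bool := if x is Some i then ~~ o i else false.
Definition out_leaf (x : V) : bool := if x is Some i then o i else false.

Lemma star_walkn2 u v : walkn arc 2 u v = in_leaf u && out_leaf v.
Proof.
rewrite walkn2; apply/existsP/idP => [[w] | ].
  by case: u w v => [i|] [j|] [k|] //=; case: (o j).
by case: u v => [i|] [k|] //= /andP[ui vk]; exists None; rewrite /= ui.
Qed.

Lemma star_dist2 u v : dist_is arc 2 u v = in_leaf u && out_leaf v.
Proof.
rewrite dist_is2 star_walkn2; apply: andb_idr.
case: u v => [i|] [k|] //= /andP[ui vk] //.
by apply/andP; split=> //; apply: contraNneq ui => -[->].
Qed.

Lemma star_walkn2_exists :
  [exists u, exists v, walkn arc 2 u v]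
    = ~~ source arc None && ~~ sink arc None.
Proof.
rewrite /source /sink !negb_forall.
apply/existsP/andP.
  case=> u /existsP[v].
  rewrite star_walkn2; case: u v => [i|] [k|] //= /andP[ui vk] //.
  split; apply/existsP; [exists (Some i) | exists (Some k)].
  - by rewrite /= negbK.
  - by rewrite /= negbK.
case=> /existsP[u /negPn uc] /existsP[v /negPn cv].
exists u; apply/existsP; exists v.
by rewrite star_walkn2; case: u v uc cv => [i|] [k|] //= -> ->.
Qed.

Lemma star_Dweight f u : 2 <= n ->
  Dweight arc D02 f u
    = f u + (if in_leaf u then \sum_(v | out_leaf v) f v else 0).
Proof.
move=> n_ge2; rewrite /Dweight.
rewrite (eq_bigl (fun v => (v == u) || in_leaf u && out_leaf v)); last first.
  move=> v; rewrite D02_nbhdE ?card_option ?card_ord //.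
  by rewrite dist_is0 star_dist2 eq_sym.
rewrite (bigD1 u) ?eqxx //=; congr (_ + _); case: ifP => u_in.
  apply: eq_bigl => v; case: eqP => [-> | _]; last by rewrite andbT.
  by case: u u_in => [i|] //= /negPf ->.
by rewrite big_pred0 // => v /=; rewrite orbF andbN.
Qed.

Lemma star_Dweight_inj f j : 2 <= n -> labeling f ->
  out_leaf j -> f j = n.+1 -> injective (Dweight arc D02 f).
Proof.
move=> n_ge2 [f_inj f_bound] j_out fj x y; rewrite !star_Dweight //.
rewrite card_option card_ord in f_bound.
have S_ge : n.+1 <= \sum_(v | out_leaf v) f v.
  by rewrite (bigD1 j) //= fj leq_addr.
have /andP[fx_pos fx_le] := f_bound x; have /andP[fy_pos fy_le] := f_bound y.
by move=> xy; apply: f_inj; case: (in_leaf x) xy; case: (in_leaf y); lia.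
Qed.

End Star.

Theorem mainTheorem4 (n : nat) (o : 'I_n -> bool) :
  2 <= n ->
  (antimagic (star_arc o) D02 <->
   (~~ source (star_arc o) None /\ ~~ sink (star_arc o) None)).
Proof.
move=> n_ge2.
have V_gt2 : 2 < #|{: option 'I_n}| by rewrite card_option card_ord.
split.
  move=> [_ [/(_ 2 isT) /diam_gt1_walkn2]].
  by rewrite star_walkn2_exists => /andP[].
move=> [not_source not_sink].
have : [exists u, exists v, walkn (star_arc o) 2 u v].
  by rewrite star_walkn2_exists not_source not_sink.
case/existsP => u /existsP[v]; rewrite star_walkn2 => /andP[u_in v_out].
have [f f_lab] := exists_labeling_max v; rewrite card_option card_ord => fv.
split; first by exists 0.
split; last by exists f; split=> //; apply: star_Dweight_inj fv.
have uv_dist2 : dist_is (star_arc o) 2 u v by rewrite star_dist2 u_in.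
by move=> k /orP[] /eqP -> //; apply: dist_le_diam V_gt2 uv_dist2.
Qed.
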